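(* Let $M$ be a sharp toric monoid and let $N\subseteq M$ be a face. Then the following conditions are equivalent: (a) $N$ splits off, i.e. there is a face $K\subseteq M$ such that the natural map $N\oplus K\to M$ is an isomorphism; (b) the ideal $(N^+)=N^++M$ of $M$ is prime and $\operatorname{ht}((N^+))\ge \operatorname{rk}(N)$; (c) the ideal $(N^+)$ is prime and the face $K=M\setminus (N^+)$ satisfies $\operatorname{rk}(K)+\operatorname{rk}(N)\le \operatorname{rk}(M)$.
   Context: Monoids are commutative. For a monoid $M$: $M^\times$ is its group of units, $M^{gp}$ its Grothendieck group, $\operatorname{rk}(M)=\dim_{\mathbb Q}(M^{gp}\otimes\mathbb Q)$. $M$ is sharp if $M^\times=\{0\}$. A toric monoid is a fine (finitely generated, integral) saturated monoid whose Grothendieck group is torsion free. For a face $N$, $N^+=N\setminus N^\times$. An ideal of $M$ is a subset $I$ with $I+M\subseteq I$; it is prime if $M\setminus I$ is a submonoid (then $M\setminus I$ is a face). For a toric monoid and a prime ideal $\mathfrak p$ with face $F=M\setminus\mathfrak p$, the height is $\operatorname{ht}(\mathfrak p)=\operatorname{rk}(M)-\operatorname{rk}(F)$. *)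

(* Monoids are modelled as submonoids of Q^n = 'rV[rat]_n. *)
From HB Require Import structures.
From mathcomp Require Import all_boot all_order all_algebra.
Set Implicit Arguments. Unset Strict Implicit. Unset Printing Implicit Defensive.
Import GRing.Theory.
Local Open Scope ring_scope.

Section MonoidDefs.
Variable n : nat.
Local Notation V := 'rV[rat]_n.

Definition subset_of (A B : V -> Prop) := forall v, A v -> B v.

Definition submonoid (M : V -> Prop) :=
  M 0 /\ (forall a b, M a -> M b -> M (a + b)).

Definition nat_span (s : seq V) (v : V) : Prop :=
  exists c : nat -> nat, v = \sum_(i < size s) (s`_i *+ c i).

(* finitely generated (integrality is automatic inside V) *)
Definition fine (M : V -> Prop) :=
  exists s : seq V, forall v, M v <-> nat_span s v.

(* Grothendieck group of M, realised inside V *)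
Definition gp (M : V -> Prop) (v : V) : Prop :=
  exists a b, M a /\ M b /\ v = a - b.

Definition saturated (M : V -> Prop) :=
  forall v, gp M v -> forall k : nat, (0 < k)%N -> M (v *+ k) -> M v.

(* toric monoid: fine and saturated; M^gp is a f.g. subgroup of Q^n,
   hence automatically torsion free *)
Definition toric (M : V -> Prop) := fine M /\ saturated M.

Definition units (M : V -> Prop) (v : V) : Prop := M v /\ M (- v).

Definition sharp (M : V -> Prop) := forall v, units M v -> v = 0.

Definition face (M N : V -> Prop) :=
  subset_of N M /\ submonoid N /\
  (forall a b, M a -> M b -> N (a + b) -> N a /\ N b).

Definition plus_part (N : V -> Prop) (v : V) : Prop := N v /\ ~ units N v.

Definition gen_ideal (M N : V -> Prop) (v : V) : Prop :=
  exists a b, plus_part N a /\ M b /\ v = a + b.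

Definition ideal (M I : V -> Prop) :=
  subset_of I M /\ (forall a b, I a -> M b -> I (a + b)).

Definition compl (M I : V -> Prop) (v : V) : Prop := M v /\ ~ I v.

Definition prime_ideal (M I : V -> Prop) :=
  ideal M I /\ submonoid (compl M I).

(* rk(A) = dim_Q (A^gp (x) Q) = dim of the Q-span of A in Q^n;
   rank_is A r  <->  rk(A) = r *)
Definition rank_is (A : V -> Prop) (r : nat) :=
  exists s : seq V, (forall v, v \in s -> A v) /\
    (forall v, A v -> v \in <<s>>%VS) /\ \dim <<s>>%VS = r.

Definition height_is (M P : V -> Prop) (h : nat) :=
  exists rM rF, rank_is M rM /\ rank_is (compl M P) rF /\ h = (rM - rF)%N.

Definition splits_off (M N : V -> Prop) :=
  exists K, face M K /\
    (forall m, M m -> exists a b, N a /\ K b /\ m = a + b) /\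
    (forall a b a' b', N a -> K b -> N a' -> K b' ->
        a + b = a' + b' -> a = a' /\ b = b').

End MonoidDefs.

(* If N splits off with complement K, an element of M lies in (N^+) exactly when its N-component is
   nonzero, so M \ (N^+) = K; unique decomposition makes the Q-spans of N and K independent, whence
   rk K + rk N <= rk M.  Conversely K := M \ (N^+) is a face, and every generator of M lies in N + K:
   a generator g outside N + K lies in (N^+), and writing g = a + b with a in N^+ and b a combination
   of generators exhibits a generator outside N + K properly dividing g, an infinite descent that
   sharpness forbids.  The rank inequality then forces the spans of N and K to meet only in 0, which
   makes N (+) K -> M injective.  Condition (b) is (c) rewritten with ht = rk M - rk K. *)

From mathcomp Require Import all_boot all_order all_algebra.
From Stdlib Require Import Classical.
From mathcomp Require Import zify.
Set Implicit Arguments. Unset Strict Implicit. Unset Printing Implicit Defensive.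
Import GRing.Theory Num.Theory.
Local Open Scope ring_scope.

Lemma finite_descent (T : eqType) (R : T -> T -> Prop) :
  (forall x y z, R x y -> R y z -> R x z) -> (forall x, ~ R x x) ->
  forall (s : seq T) (P : T -> Prop), (forall x, P x -> x \in s) ->
  (forall x, P x -> exists2 y, P y & R y x) -> forall x, ~ P x.
Proof.
move=> Rtr Rirr s; have [k] := ubnP (size s); elim: k s => // k IH s.
rewrite ltnS => size_s P Ps desc x Px.
have xs := Ps x Px.
have [w Pw Rwx] := desc x Px.
apply: (IH (rem x s) _ (fun z => P z /\ R z x) _ _ w (conj Pw Rwx)).
- by rewrite size_rem //; case: (s) size_s xs.
- move=> y [Py Ryx]; apply: rem_mem (Ps y Py); apply/eqP => yx.
  by apply: (Rirr x); rewrite -{1}yx.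
- move=> y [Py Ryx]; have [z Pz Rzy] := desc y Py.
  by exists z => //; split => //; apply: Rtr Rzy Ryx.
Qed.

Lemma bounded_ex_max (Q : nat -> Prop) (b : nat) :
  (exists d, Q d) -> (forall d, Q d -> (d <= b)%N) ->
  exists2 d, Q d & forall d', Q d' -> (d' <= d)%N.
Proof.
elim: b => [|b IH] [d Qd] Qb.
  by exists d => // d' /Qb; rewrite leqn0 => /eqP->.
have [Qb1|nQb1] := classic (Q b.+1); first by exists b.+1.
apply: IH; first by exists d.
move=> d' Qd'; have := Qb _ Qd'; rewrite leq_eqVlt ltnS => /orP [/eqP eb1|//].
by rewrite eb1 in Qd'.
Qed.

Section SubmonoidsOfQn.
Variable n : nat.
Local Notation V := 'rV[rat]_n.

Definition msum (A B : V -> Prop) (v : V) : Prop :=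
  exists a b, A a /\ B b /\ v = a + b.

Definition add_inj (A B : V -> Prop) :=
  forall a b a' b', A a -> B b -> A a' -> B b' ->
    a + b = a' + b' -> a = a' /\ b = b'.

Lemma rank_exists (A : V -> Prop) : exists r, rank_is A r.
Proof.
pose Q d := exists2 s : seq V, (forall v, v \in s -> A v) & \dim <<s>> = d.
have [d [s sA sd] dmax] : exists2 d, Q d & forall d', Q d' -> (d' <= d)%N.
  apply: (@bounded_ex_max _ (\dim (fullv : {vspace V}))).
    by exists 0%N, [::] => //; rewrite span_nil dimv0.
  by move=> d [s _ <-]; apply/dimvS/subvf.
exists d, s; split=> //; split=> // v Av.
have s_vs : (<<s>> <= <<v :: s>>)%VS by rewrite span_cons addvSr.
have /eqP-> : (<<s>> == <<v :: s>>)%VS.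
  rewrite eqEdim s_vs sd; apply: dmax; exists (v :: s) => //.
  by move=> w; rewrite in_cons => /orP [/eqP->|/sA].
by rewrite memv_span ?mem_head.
Qed.

Lemma rank_le (A B : V -> Prop) a b : subset_of A B ->
  rank_is A a -> rank_is B b -> (a <= b)%N.
Proof.
move=> AB [sA [sA_A [A_sA <-]]] [sB [_ [B_sB <-]]].
by apply/dimvS/span_subvP => v /sA_A /AB /B_sB.
Qed.

Lemma submonoid_muln (A : V -> Prop) x k : submonoid A -> A x -> A (x *+ k).
Proof.
move=> [A0 AD] Ax; elim: k => [|k IH]; first by rewrite mulr0n.
by rewrite mulrS; apply: AD.
Qed.

Lemma submonoid_sum (A : V -> Prop) m (F : 'I_m -> V) : submonoid A ->
  (forall i, A (F i)) -> A (\sum_(i < m) F i).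
Proof. by move=> [A0 AD] AF; apply: big_ind. Qed.

Lemma submonoid_nat_span (A : V -> Prop) (s : seq V) v : submonoid A ->
  (forall g, g \in s -> A g) -> nat_span s v -> A v.
Proof.
move=> smA sA [c ->]; apply: submonoid_sum => // i.
by apply: submonoid_muln => //; apply/sA/mem_nth.
Qed.

Lemma submonoid_msum (A B : V -> Prop) :
  submonoid A -> submonoid B -> submonoid (msum A B).
Proof.
move=> [A0 AD] [B0 BD]; split; first by exists 0, 0; rewrite addr0.
move=> _ _ [a [b [Aa [Bb ->]]]] [a' [b' [Aa' [Bb' ->]]]].
by exists (a + a'), (b + b'); rewrite addrACA; split; [apply: AD|split; [apply: BD|]].
Qed.

Lemma nat_span_mem (s : seq V) g : g \in s -> nat_span s g.
Proof.
move=> gs; exists (fun i => nat_of_bool (i == index g s)).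
rewrite (bigD1 (Ordinal (etrans (index_mem g s) gs))) //= eqxx nth_index //.
rewrite big1 ?addr0 // => i ne_i.
by rewrite -val_eqE /= in ne_i; rewrite (negbTE ne_i).
Qed.

Lemma nat_span_cases (S : V -> Prop) (s : seq V) v : submonoid S -> nat_span s v ->
  S v \/ exists j : 'I_(size s), ~ S s`_j /\ nat_span s (v - s`_j).
Proof.
move=> smS [c ->].
have [[j [cj_neq0 nS_j]]|] := classic (exists j : 'I_(size s), c j <> 0%N /\ ~ S s`_j).
  right; exists j; split=> //; exists (fun i => if i == j :> nat then (c i).-1 else c i).
  rewrite (bigD1 j) //= [RHS](bigD1 j) //= eqxx -{1}(prednK (n := c j)); last by lia.
  have addKl (x y z : V) : x + y + z - x = y + z by rewrite addrAC [x + y]addrC addrK.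
  rewrite mulrS addKl; congr (_ + _); apply: eq_bigr => i ne_ij.
  by rewrite -val_eqE in ne_ij; rewrite (negbTE ne_ij).
move=> no_bad_generator; left; apply: submonoid_sum => // i.
have [->|ci_neq0] := eqVneq (c i) 0%N; first by rewrite mulr0n; case: smS.
apply: submonoid_muln => //; apply: NNPP => nS_i; apply: no_bad_generator.
by exists i; split=> //; apply/eqP.
Qed.

Section Grothendieck.
Variable A : V -> Prop.
Hypothesis smA : submonoid A.

Lemma gp_of v : A v -> gp A v.
Proof. by move=> Av; exists v, 0; rewrite subr0; split=> //; case: smA. Qed.

Lemma gpD u v : gp A u -> gp A v -> gp A (u + v).
Proof.
move=> [a [b [Aa [Ab ->]]]] [a' [b' [Aa' [Ab' ->]]]].
by exists (a + a'), (b + b'); rewrite opprD addrACA; split; [apply: smA.2|split; [apply: smA.2|]].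
Qed.

Lemma gpN v : gp A v -> gp A (- v).
Proof. by move=> [a [b [Aa [Ab ->]]]]; exists b, a; rewrite opprB. Qed.

Lemma gp_muln v k : gp A v -> gp A (v *+ k).
Proof.
move=> Av; elim: k => [|k IH]; first by rewrite mulr0n; apply/gp_of; case: smA.
by rewrite mulrS; apply: gpD.
Qed.

Lemma gp_mulz v z : gp A v -> gp A (v *~ z).
Proof. by case: z => k Av; rewrite ?NegzE ?mulrNz; [|apply: gpN]; apply: gp_muln. Qed.

(* Clear the denominator of one coefficient at a time. *)
Lemma span_gp (s : seq V) v : (forall x, x \in s -> A x) -> v \in <<s>>%VS ->
  exists2 k, (0 < k)%N & gp A (v *+ k).
Proof.
elim: s v => [|x s IH] v sA.
  by rewrite span_nil memv0 => /eqP->; exists 1%N => //; rewrite mul0rn; apply/gp_of; case: smA.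
rewrite span_cons => /memv_addP [_ /vlineP [c ->] [w ws ->]].
have [k k_gt0 gp_wk] : exists2 k, (0 < k)%N & gp A (w *+ k).
  by apply: IH ws => y ys; apply: sA; rewrite in_cons ys orbT.
pose d := `|denq c|%N.
have d_gt0 : (0 < d)%N by rewrite absz_gt0 denq_neq0.
have cxd : (c *: x) *+ d = x *~ numq c.
  by rewrite -scaler_nat -scaler_int scalerA numqE mulrC natr_absz ger0_norm ?denq_ge0.
exists (k * d)%N; first by rewrite muln_gt0 k_gt0.
rewrite mulrnDl {1}mulnC !mulrnA cxd.
by apply: gpD; apply: gp_muln => //; apply/gp_mulz/gp_of/sA/mem_head.
Qed.

End Grothendieck.

Lemma add_inj_gp_eq0 (A B : V -> Prop) v : add_inj A B -> gp A v -> gp B v -> v = 0.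
Proof.
move=> injAB [a [b [Aa [Ab ->]]]] [c [f [Bc [Bf /eqP]]]].
rewrite subr_eq addrAC eq_sym subr_eq eq_sym => /eqP eq_af_bc.
by have [-> _] := injAB _ _ _ _ Aa Bf Ab Bc (etrans eq_af_bc (addrC _ _)); rewrite subrr.
Qed.

Lemma span_cap_eq0 (A B : V -> Prop) (sA sB : seq V) :
  submonoid A -> submonoid B -> add_inj A B ->
  (forall x, x \in sA -> A x) -> (forall x, x \in sB -> B x) ->
  (<<sA>> :&: <<sB>> = 0)%VS.
Proof.
move=> smA smB injAB sA_A sB_B; apply/eqP; rewrite -subv0.
apply/subvP => v /memv_capP [vA vB]; rewrite memv0.
have [k k_gt0 gpA_vk] := span_gp smA sA_A vA.
have [l l_gt0 gpB_vl] := span_gp smB sB_B vB.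
have /eqP : v *+ (k * l) = 0.
  apply: (add_inj_gp_eq0 injAB); first by rewrite mulrnA; apply: gp_muln.
  by rewrite mulnC mulrnA; apply: gp_muln.
by rewrite -scaler_nat scaler_eq0 pnatr_eq0 eqn0Ngt muln_gt0 k_gt0 l_gt0.
Qed.

Lemma rank_add_le (M A B : V -> Prop) rA rB rM :
  submonoid A -> submonoid B -> subset_of A M -> subset_of B M -> add_inj A B ->
  rank_is A rA -> rank_is B rB -> rank_is M rM -> (rA + rB <= rM)%N.
Proof.
move=> smA smB AM BM injAB [sA [sA_A [_ <-]]] [sB [sB_B [_ <-]]] [sM [_ [M_sM <-]]].
rewrite -dimv_disjoint_sum; last exact: (span_cap_eq0 smA smB).
apply: dimvS; rewrite subv_add; apply/andP; split; apply/span_subvP => v vs.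
  exact/M_sM/AM/sA_A.
exact/M_sM/BM/sB_B.
Qed.

Lemma add_inj_of_rank (M A B : V -> Prop) rA rB rM :
  (forall m, M m -> msum A B m) ->
  rank_is A rA -> rank_is B rB -> rank_is M rM -> (rA + rB <= rM)%N -> add_inj A B.
Proof.
move=> M_AB [sA [_ [A_sA <-]]] [sB [_ [B_sB <-]]] [sM [sM_M [_ <-]]] dim_le.
have cap0 : (<<sA>> :&: <<sB>> = 0)%VS.
  apply/eqP; rewrite -dimv_eq0; have := dimv_sum_cap <<sA>> <<sB>>.
  suff : (\dim <<sM>> <= \dim (<<sA>> + <<sB>>))%N by lia.
  apply/dimvS/span_subvP => _ /sM_M /M_AB [a [b [Aa [Bb ->]]]].
  by apply: memv_add; [apply: A_sA|apply: B_sB].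
move=> a b a' b' Aa Bb Aa' Bb' eq_ab.
have : a - a' == 0.
  rewrite -memv0 -cap0; apply/memv_capP; split; first by apply: memvB; apply: A_sA.
  have -> : a - a' = b' - b by apply/eqP; rewrite subr_eq addrAC eq_sym subr_eq eq_ab addrC.
  by apply: memvB; apply: B_sB.
by rewrite subr_eq0 => /eqP eq_a; split=> //; move: eq_ab; rewrite eq_a => /addrI.
Qed.

Lemma fine_submonoid (M : V -> Prop) : fine M -> submonoid M.
Proof.
move=> [s Ms]; split; first by apply/Ms; exists (fun=> 0%N); rewrite big1 // => i; rewrite mulr0n.
move=> _ _ /Ms [c ->] /Ms [d ->]; apply/Ms; exists (fun i => c i + d i)%N.
by rewrite -big_split; apply: eq_bigr => i _; rewrite mulrnDr.
Qed.

Lemma sharp_addr_eq0 (M : V -> Prop) a b :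
  sharp M -> M a -> M b -> a + b = 0 -> a = 0.
Proof.
move=> shM Ma Mb /eqP; rewrite addr_eq0 => /eqP eq_a.
by apply: shM; split=> //; rewrite eq_a opprK.
Qed.

Lemma plus_part_neq0 (N : V -> Prop) a : submonoid N -> plus_part N a -> a <> 0.
Proof. by move=> [N0 _] [_ not_unit] a0; apply: not_unit; split; rewrite a0 ?oppr0. Qed.

Lemma plus_part_of_sharp (M N : V -> Prop) a :
  sharp M -> subset_of N M -> N a -> a <> 0 -> plus_part N a.
Proof. by move=> shM NM Na a_neq0; split=> // -[_ Nna]; apply/a_neq0/shM; split; apply: NM. Qed.

Lemma gen_ideal_ideal (M N : V -> Prop) :
  submonoid M -> subset_of N M -> ideal M (gen_ideal M N).
Proof.
move=> [_ MD] NM; split; first by move=> _ [a [b [[Na _] [Mb ->]]]]; apply/MD/Mb/NM.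
move=> _ b [x [y [Nx [My ->]]]] Mb; exists x, (y + b).
by rewrite addrA; split=> //; split=> //; apply: MD.
Qed.

Lemma prime_compl_face (M I : V -> Prop) : prime_ideal M I -> face M (compl M I).
Proof.
move=> [[_ ID] smK]; split; first by move=> v [].
split=> // a b Ma Mb [_ nI_ab]; split; split=> // Ia; apply: nI_ab.
  exact: ID.
by rewrite addrC; apply: ID.
Qed.

Definition properly_divides (M : V -> Prop) (a b : V) : Prop :=
  exists x, M x /\ x <> 0 /\ b = a + x.

Lemma properly_divides_trans (M : V -> Prop) a b c : submonoid M -> sharp M ->
  properly_divides M a b -> properly_divides M b c -> properly_divides M a c.
Proof.
move=> [_ MD] shM [x [Mx [x_neq0 ->]]] [y [My [y_neq0 ->]]].
exists (x + y); rewrite addrA; split; first exact: MD.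
by split=> // /(sharp_addr_eq0 shM Mx My).
Qed.

Lemma properly_divides_irrefl (M : V -> Prop) a : ~ properly_divides M a a.
Proof. by move=> [x [_ [x_neq0 eq_a]]]; apply/x_neq0/(@addrI _ a); rewrite addr0 -eq_a. Qed.

Lemma gen_ideal_proper_divisor (M N S : V -> Prop) (s : seq V) g :
  (forall v, M v <-> nat_span s v) -> sharp M -> face M N -> submonoid S ->
  (forall a b, N a -> S b -> S (a + b)) -> gen_ideal M N g -> ~ S g ->
  exists2 j : 'I_(size s), ~ S s`_j & properly_divides M s`_j g.
Proof.
move=> Ms shM [NM [smN _]] smS NS [a [b [[Na nu_a] [Mb ->]]]] nS_ab.
have [_ MD] := fine_submonoid (ex_intro _ s Ms).
have [Sb|[j [nS_j /Ms M_b_j]]] := nat_span_cases smS (proj1 (Ms b) Mb).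
  by case: nS_ab; apply: NS.
exists j => //; exists (a + (b - s`_j)); split; first exact/MD/M_b_j/NM.
split; last by rewrite addrCA [s`_j + _]addrC subrK.
by move=> /(sharp_addr_eq0 shM (NM a Na) M_b_j); apply: plus_part_neq0 smN _.
Qed.

(* Descent along proper divisibility in [M], a strict order because [M] is sharp. *)
Lemma compl_gen_ideal_decomposition (M N : V -> Prop) :
  fine M -> sharp M -> face M N -> prime_ideal M (gen_ideal M N) ->
  forall m, M m -> msum N (compl M (gen_ideal M N)) m.
Proof.
move=> fM shM fN prI; have [NM [smN _]] := fN.
set K := compl M (gen_ideal M N); set S := msum N K.
have smM := fine_submonoid fM; have [s Ms] := fM.
have smS : submonoid S := submonoid_msum smN prI.2.
have NS a b : N a -> S b -> S (a + b).
  move=> Na [a' [k [Na' [Kk ->]]]]; exists (a + a'), k.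
  by rewrite addrA; split=> //; apply: smN.2.
suff sS g : g \in s -> S g by move=> m /Ms; apply: submonoid_nat_span.
move=> gs; apply: NNPP => nSg.
apply: (finite_descent (fun _ _ _ => properly_divides_trans smM shM)
  (@properly_divides_irrefl M) (s := s) (P := fun g => g \in s /\ ~ S g)) (conj gs nSg).
  by move=> x [].
move=> x [xs nSx].
have Ix : gen_ideal M N x.
  apply: NNPP => nIx; apply: nSx; exists 0, x.
  by rewrite add0r; split; [case: smN|split=> //; split=> //; apply/Ms/nat_span_mem].
have [j nS_j div_jx] := gen_ideal_proper_divisor Ms shM fN smS NS Ix nSx.
by exists s`_j => //; split=> //; apply: mem_nth.
Qed.

Lemma compl_gen_ideal_split (M N K : V -> Prop) :
  sharp M -> subset_of N M -> submonoid N -> subset_of K M ->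
  (forall m, M m -> msum N K m) -> add_inj N K ->
  forall v, compl M (gen_ideal M N) v <-> K v.
Proof.
move=> shM NM smN KM MNK injNK v; split.
  move=> [Mv nIv]; have [a [b [Na [Kb eq_v]]]] := MNK v Mv.
  have [a0|/eqP a_neq0] := eqVneq a 0; first by rewrite eq_v a0 add0r.
  by case: nIv; exists a, b; split; [apply: (plus_part_of_sharp shM)|split=> //; apply: KM].
move=> Kv; split; first exact: KM.
move=> [a [b [[Na nu_a] [Mb eq_v]]]]; have [a' [k [Na' [Kk eq_b]]]] := MNK b Mb.
have [eq_aa' _] : a + a' = 0 /\ k = v.
  apply: injNK => //; [exact: smN.2|exact: smN.1|by rewrite add0r eq_v eq_b addrA].
exact: plus_part_neq0 smN (conj Na nu_a) (sharp_addr_eq0 shM (NM _ Na) (NM _ Na') eq_aa').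
Qed.

Lemma prime_rank_sum_of_splits_off (M N : V -> Prop) :
  submonoid M -> sharp M -> face M N -> splits_off M N ->
  prime_ideal M (gen_ideal M N) /\
  forall rK rN rM, rank_is (compl M (gen_ideal M N)) rK -> rank_is N rN ->
    rank_is M rM -> (rK + rN <= rM)%N.
Proof.
move=> smM shM [NM [smN _]] [K [[KM [[K0 KD] _]] [MNK injNK]]].
have eqK := compl_gen_ideal_split shM NM smN KM MNK injNK.
have smC : submonoid (compl M (gen_ideal M N)).
  by split=> [|a b /eqK Ka /eqK Kb]; apply/eqK; [|apply: KD].
split; first by split=> //; apply: gen_ideal_ideal.
move=> rK rN rM rkK rkN rkM; rewrite addnC; apply: (rank_add_le smN smC NM _ _ rkN rkK rkM).
  by move=> v [].
by move=> a b a' b' Na /eqK Kb Na' /eqK Kb'; apply: injNK.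
Qed.

Lemma splits_off_of_prime_rank_sum (M N : V -> Prop) :
  fine M -> sharp M -> face M N -> prime_ideal M (gen_ideal M N) ->
  (forall rK rN rM, rank_is (compl M (gen_ideal M N)) rK -> rank_is N rN ->
    rank_is M rM -> (rK + rN <= rM)%N) ->
  splits_off M N.
Proof.
move=> fM shM fN prI rank_sum_le.
exists (compl M (gen_ideal M N)); split; first exact: prime_compl_face.
split; first exact: compl_gen_ideal_decomposition.
have [rN rkN] := rank_exists N; have [rK rkK] := rank_exists (compl M (gen_ideal M N)).
have [rM rkM] := rank_exists M.
apply: (add_inj_of_rank (compl_gen_ideal_decomposition fM shM fN prI) rkN rkK rkM).
by rewrite addnC; apply: rank_sum_le.
Qed.

Lemma height_bound_iff (M P N : V -> Prop) :
  (forall h rN, height_is M P h -> rank_is N rN -> (rN <= h)%N) <->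
  (forall rK rN rM, rank_is (compl M P) rK -> rank_is N rN -> rank_is M rM ->
    (rK + rN <= rM)%N).
Proof.
split=> [ht_ge rK rN rM rkK rkN rkM|rank_sum_le h rN [rM [rK [rkM [rkK ->]]]] rkN].
  have := rank_le (fun v (Cv : compl M P v) => Cv.1) rkK rkM.
  have := ht_ge (rM - rK)%N rN (ex_intro _ rM (ex_intro _ rK (conj rkM (conj rkK erefl)))) rkN.
  lia.
by have := rank_sum_le _ _ _ rkK rkN rkM; lia.
Qed.

End SubmonoidsOfQn.

Theorem lemma2p1 (n : nat) (M N : 'rV[rat]_n -> Prop) :
  toric M -> sharp M -> face M N ->
  (splits_off M N <->
   (prime_ideal M (gen_ideal M N) /\
    forall h rN, height_is M (gen_ideal M N) h -> rank_is N rN -> (rN <= h)%N)) /\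
  ((prime_ideal M (gen_ideal M N) /\
    forall h rN, height_is M (gen_ideal M N) h -> rank_is N rN -> (rN <= h)%N) <->
   (prime_ideal M (gen_ideal M N) /\
    forall rK rN rM, rank_is (compl M (gen_ideal M N)) rK -> rank_is N rN ->
      rank_is M rM -> (rK + rN <= rM)%N)).
Proof.
move=> [fM _] shM fN.
have bc := and_iff_compat_l (prime_ideal M (gen_ideal M N))
  (height_bound_iff M (gen_ideal M N) N).
split=> //; apply: (iff_trans _ (iff_sym bc)); split.
  exact: prime_rank_sum_of_splits_off (fine_submonoid fM) shM fN.
by move=> [prI rank_sum_le]; apply: splits_off_of_prime_rank_sum.
Qed.
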